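(* Let $n\ge 2$ and $\varphi$ a linear functional with $\varphi(e_i)=a_i$, $0<a_1<\dots<a_n$. The number of $\varphi$-monotone paths on $\diamond^n$ is $\dfrac{2^{2n-1}-2}{3}$.
   Context: $\diamond^n=\mathrm{conv}\{\pm e_1,\dots,\pm e_n\}$. A monotone path is a sequence of vertices $-e_n=v_0,v_1,\dots,v_m=e_n$ of $\diamond^n$ such that each $[v_{j-1},v_j]$ is an edge of $\diamond^n$ (i.e. $v_{j-1}\ne -v_j$) and $\varphi(v_{j-1})<\varphi(v_j)$ for all $j$. *)

From HB Require Import structures.
From mathcomp Require Import all_boot all_order all_algebra.
Set Implicit Arguments. Unset Strict Implicit. Unset Printing Implicit Defensive.
Import Order.TTheory GRing.Theory Num.Theory.
Local Open Scope ring_scope.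

(* Standard basis vector e_{k+1} of R^n (0-based index k : nat). *)
Definition evec (R : realFieldType) (n k : nat) : 'rV[R]_n :=
  \row_(j < n) ((nat_of_ord j == k)%:R : R).

Definition cross_vertex (R : realFieldType) (n : nat) (v : 'rV[R]_n) : bool :=
  [exists i : 'I_n, (v == evec R n i) || (v == - evec R n i)].

Definition phi (R : realFieldType) (n : nat) (a : 'I_n -> R) (v : 'rV[R]_n) : R :=
  \sum_(i < n) a i * v 0 i.

(* Monotone path: v_0 = -e_n, ..., v_m = e_n, all vertices, consecutive
   vertices form an edge (v_{j-1} <> -v_j) and phi strictly increases. *)
Definition monotone_path (R : realFieldType) (n : nat) (a : 'I_n -> R)
    (s : seq 'rV[R]_n) : Prop :=
  exists2 tl : seq 'rV[R]_n,
    s = (- evec R n n.-1) :: tl &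
    [/\ all (@cross_vertex R n) s,
        last (- evec R n n.-1) tl = evec R n n.-1 &
        path (fun x y => (x != - y) && (phi a x < phi a y))
             (- evec R n n.-1) tl].

From HB Require Import structures.
From mathcomp Require Import all_boot all_order all_algebra zify.
Import Order.TTheory GRing.Theory Num.Theory.

(* Since phi(-e_i) = -a_i < 0 < a_j = phi(e_j) and the a_i increase, sorting
   vertices by phi lists the negative vertices -e_i by decreasing i and then the
   positive ones e_j by increasing j.  A monotone path is phi-sorted, so it is
   determined by its vertex set; it contains -e_n and e_n, so it is encoded by two
   bit strings x, y of length n - 1 telling which -e_i and e_j (i, j < n) it visits.
   Conversely each pair (x, y) gives a phi-sorted list of vertices, its "ladder".
   Two consecutive vertices of a ladder are antipodal only at the junction between
   the last negative vertex -e_i and the first positive vertex e_j, where i and j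
   are the first set bits of x and y (or n when there is none).  Hence monotone
   paths correspond bijectively to the pairs whose first set bits differ.  Among
   the 4^k pairs of bit strings of length k, those with the same first set bit
   number E(k) with E(0) = 1 and E(k+1) = 4^k + E(k), so 3 E(k) = 4^k + 2, and the
   remaining (2 * 4^k - 2) / 3 pairs give the count, with k = n - 1.

   Indices are 0-based: e_(k+1) is [evec R n k]. *)

Definition positions (b : seq bool) : seq nat := mask b (iota 0 (size b)).

Lemma mem_positions b i : (i \in positions b) = nth false b i.
Proof.
rewrite in_mask ?iota_uniq // mem_iota add0n /=.
have [lt_i_b|ge_i_b] := ltnP i (size b); last by rewrite [RHS]nth_default.
have := nth_iota 0 0 lt_i_b; rewrite add0n => {1}<-.
by rewrite index_uniq ?size_iota ?iota_uniq.
Qed.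

Lemma positions_sorted b : sorted ltn (positions b).
Proof. exact/sorted_mask/iota_ltn_sorted/ltn_trans. Qed.

Lemma positions_lt b i : i \in positions b -> i < size b.
Proof. by move/mem_mask; rewrite mem_iota. Qed.

Lemma positions_rcons b c :
  positions (rcons b c) = positions b ++ nseq c (size b).
Proof.
by rewrite /positions size_rcons -addn1 iotaD cats1 mask_rcons ?size_iota.
Qed.

Lemma head_positions b : head (size b) (positions b) = find id b.
Proof.
elim: b => //= c b IH; rewrite /positions /= -[1]/(1 + 0) iotaDl -map_mask.
case: c => //=; rewrite -/(positions b).
by case: (positions b) IH => [|i s] /= <-.
Qed.

Fixpoint bitstrings (k : nat) : seq (seq bool) :=
  if k is k'.+1 then
    [seq true :: b | b <- bitstrings k'] ++ [seq false :: b | b <- bitstrings k']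
  else [:: [::]].

Lemma mem_bitstrings k b : (b \in bitstrings k) = (size b == k).
Proof.
elim: k b => [|k IH] [|c b] //=; rewrite mem_cat.
  by apply/negbTE; rewrite negb_or; apply/andP; split; apply/mapP => -[].
have mem_cons d : (c :: b \in [seq d :: b' | b' <- bitstrings k]) = (c == d) && (size b == k).
  by rewrite -IH; apply/mapP/andP => [[b' hb' [-> ->]]|[/eqP -> hb]]; [|exists b].
by case: c mem_cons => mem_cons; rewrite !mem_cons ?orbF.
Qed.

Lemma uniq_bitstrings k : uniq (bitstrings k).
Proof.
elim: k => //= k IH; rewrite cat_uniq !map_inj_uniq ?IH //=; try by move=> ? ? [].
by rewrite andbT; apply/hasPn => _ /mapP [b _ ->]; apply/mapP => -[].
Qed.

Lemma size_bitstrings k : size (bitstrings k) = 2 ^ k.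
Proof. by elim: k => //= k IH; rewrite size_cat !size_map IH expnS mul2n addnn. Qed.

Definition bitpairs (k : nat) : seq (seq bool * seq bool) :=
  [seq (x, y) | x <- bitstrings k, y <- bitstrings k].

Lemma mem_bitpairs k p : (p \in bitpairs k) = (size p.1 == k) && (size p.2 == k).
Proof.
apply/allpairsP/andP => [[[x y] [/= hx hy ->]]|[hx hy]].
  by rewrite -!mem_bitstrings.
by exists (p.1, p.2); rewrite ?mem_bitstrings -?surjective_pairing.
Qed.

Lemma uniq_bitpairs k : uniq (bitpairs k).
Proof. by apply: allpairs_uniq; rewrite ?uniq_bitstrings // => -[? ?] [? ?]. Qed.

(* The pairs that will encode monotone paths: first set bits at distinct
   places (with [find] returning the length when no bit is set). *)
Definition first_bits_differ (p : seq bool * seq bool) : bool :=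
  find id p.1 != find id p.2.

Lemma count_allpairs (S T : Type) (P : pred (S * T)) (s : seq S) (t : seq T) :
  count P [seq (x, y) | x <- s, y <- t] = \sum_(x <- s) count (fun y => P (x, y)) t.
Proof. by elim: s => [|x s IH]; rewrite ?big_nil ?big_cons //= count_cat count_map IH. Qed.

Lemma count_same_first_cons (c d : bool) x (B : seq (seq bool)) :
  count (fun y => ~~ first_bits_differ (c :: x, y)) [seq d :: y | y <- B]
  = if c then (if d then size B else 0)
    else (if d then 0 else count (fun y => ~~ first_bits_differ (x, y)) B).
Proof.
rewrite count_map; case: c; case: d;
  rewrite -?(count_predT B) -?(count_pred0 B); apply: eq_count => y //=.
Qed.

Lemma same_first_recurrence k :
  count (predC first_bits_differ) (bitpairs k.+1)
  = 2 ^ k * 2 ^ k + count (predC first_bits_differ) (bitpairs k).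
Proof.
rewrite !count_allpairs /= !big_cat !big_map /=.
under eq_bigr do rewrite count_cat !count_same_first_cons addn0.
under [X in _ + X]eq_bigr do rewrite count_cat !count_same_first_cons add0n.
by rewrite big_const_seq count_predT iter_addn_0 size_bitstrings.
Qed.

Lemma count_first_bits_differ k :
  3 * count first_bits_differ (bitpairs k) = 2 * (2 ^ k * 2 ^ k) - 2.
Proof.
have same_first : 3 * count (predC first_bits_differ) (bitpairs k) = 2 ^ k * 2 ^ k + 2.
  elim: k => // k IH; rewrite same_first_recurrence !expnS; lia.
have := count_predC first_bits_differ (bitpairs k).
rewrite size_allpairs size_bitstrings; lia.
Qed.

Lemma nth_rcons_bits (P : pred nat) k i :
  P k -> i <= k -> nth false (rcons [seq P j | j <- iota 0 k] true) i = P i.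
Proof.
move=> Pk le_ik; rewrite nth_rcons size_map size_iota.
case: ltngtP le_ik => // [lt_ik _|-> _]; last by [].
by rewrite (nth_map 0) ?nth_iota ?size_iota.
Qed.

Lemma path_map_all {T U : Type} (P : pred T) (f : T -> U) (r : rel U) z s :
  (forall u v, P u -> P v -> r (f u) (f v)) -> all P (z :: s) ->
  path r (f z) (map f s).
Proof.
move=> rP; elim: s z => //= y s IH z /and3P[Pz Py Ps].
by rewrite rP ?IH //= Py.
Qed.

Lemma sorted_cat_pivot {d : Order.disp_t} {T : porderType d} (c : T) (s1 s2 : seq T) :
  sorted <%O s1 -> sorted <%O s2 ->
  all (fun z => (z < c)%O) s1 -> all (fun z => (c < z)%O) s2 ->
  sorted <%O (s1 ++ s2).
Proof.
case: s1 => [|h t] //= p1 p2 /andP[hc a1] a2.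
rewrite cat_path p1 /=; case: s2 p2 a2 => [|h2 t2] //= -> /andP[ch2 _].
rewrite andbT; apply: (@lt_trans _ _ c) => //.
by have := mem_last h t; rewrite in_cons => /predU1P[-> //|/(allP a1)].
Qed.

Local Open Scope ring_scope.

Section Ladders.
Context {R : realFieldType} {n : nat}.
Local Notation e := (evec R n).

Lemma opp_evec_neq (k : nat) {j : nat} : (j < n)%N -> - e k != e j.
Proof.
move=> lt_jn; apply/eqP => /(congr1 (fun v : 'rV[R]_n => v 0 (Ordinal lt_jn))).
rewrite !mxE /= eqxx => /eqP; rewrite lt_eqF //.
by rewrite (le_lt_trans _ ltr01) // oppr_le0.
Qed.

Lemma evec_inj {k j : nat} : (k < n)%N -> e k = e j -> k = j.
Proof.
move=> lt_kn /(congr1 (fun v : 'rV[R]_n => v 0 (Ordinal lt_kn))); rewrite !mxE /= eqxx.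
by case: eqP => // _ /eqP; rewrite oner_eq0.
Qed.

(* The phi-sorted sequence of vertices visiting -e_i for the set bits i of x
   (decreasing i), then e_j for the set bits j of y (increasing j); the last bit
   of both strings is forced, i.e. the endpoints -e_(n-1) and e_(n-1) are visited. *)
Definition ladder (x y : seq bool) : seq 'rV[R]_n :=
  rev [seq - e i | i <- positions (rcons x true)] ++
  [seq e j | j <- positions (rcons y true)].

Definition ladder_tail (x y : seq bool) : seq 'rV[R]_n :=
  rev [seq - e i | i <- positions x] ++ [seq e j | j <- positions (rcons y true)].

Lemma eq_mem_vertices (s1 s2 : seq 'rV[R]_n) :
  all (@cross_vertex R n) s1 -> all (@cross_vertex R n) s2 ->
  (forall i, (i < n)%N -> (e i \in s1) = (e i \in s2) /\ (- e i \in s1) = (- e i \in s2)) ->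
  s1 =i s2.
Proof.
move=> vert1 vert2 agree u; apply/idP/idP => mem_u;
  [have /existsP[i] := allP vert1 u mem_u | have /existsP[i] := allP vert2 u mem_u];
  have [agree_pos agree_neg] := agree i (ltn_ord i);
  case/orP=> /eqP eq_u; rewrite eq_u in mem_u *;
  by [rewrite -agree_pos | rewrite -agree_neg | rewrite agree_pos | rewrite agree_neg].
Qed.

Hypothesis n_gt0 : (0 < n)%N.

Lemma positions_bounded {b : seq bool} :
  size b = n.-1 -> all (fun i => i < n)%N (positions (rcons b true)).
Proof. by move=> sb; apply/allP => i /positions_lt; rewrite size_rcons sb prednK. Qed.

Section OneLadder.
Context {x y : seq bool}.
Hypotheses (size_x : size x = n.-1) (size_y : size y = n.-1).

Lemma ladder_cons : ladder x y = - e n.-1 :: ladder_tail x y.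
Proof. by rewrite /ladder /ladder_tail positions_rcons map_cat rev_cat size_x. Qed.

Lemma ladder_last : last (- e n.-1) (ladder_tail x y) = e n.-1.
Proof. by rewrite /ladder_tail positions_rcons map_cat !last_cat size_y. Qed.

Lemma mem_ladder u : u \in ladder x y -> exists2 i, (i < n)%N &
  (u = - e i /\ nth false (rcons x true) i) \/ (u = e i /\ nth false (rcons y true) i).
Proof.
rewrite mem_cat mem_rev => /orP[] /mapP[i i_pos ->]; exists i.
- by have /allP := positions_bounded size_x; apply.
- by left; rewrite -mem_positions.
- by have /allP := positions_bounded size_y; apply.
- by right; rewrite -mem_positions.
Qed.

Lemma ladder_vertices : all (@cross_vertex R n) (ladder x y).
Proof.
apply/allP => u /mem_ladder[i lt_in [[-> _]|[-> _]]]; apply/existsP;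
  by exists (Ordinal lt_in); rewrite eqxx ?orbT.
Qed.

Lemma mem_ladder_neg i : (i < n)%N -> (- e i \in ladder x y) = nth false (rcons x true) i.
Proof.
move=> lt_in; apply/idP/idP => [|bit_i]; last first.
  by rewrite mem_cat mem_rev; apply/orP; left; apply/mapP; exists i; rewrite ?mem_positions.
case/mem_ladder=> j lt_jn [[/oppr_inj/(evec_inj lt_in) -> //]|[eq_ij _]].
by have := opp_evec_neq i lt_jn; rewrite eq_ij eqxx.
Qed.

Lemma mem_ladder_pos i : (i < n)%N -> (e i \in ladder x y) = nth false (rcons y true) i.
Proof.
move=> lt_in; apply/idP/idP => [|bit_i]; last first.
  by rewrite mem_cat; apply/orP; right; apply/mapP; exists i; rewrite ?mem_positions.
case/mem_ladder=> j lt_jn [[eq_ij _]|[/(evec_inj lt_in) -> //]].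
by have := opp_evec_neq j lt_in; rewrite -eq_ij eqxx.
Qed.

(* The ladder is a sequence of edges except possibly at the junction between
   its last negative vertex -e_(find x) and its first positive vertex e_(find y):
   two negative or two positive vertices are never antipodal. *)
Lemma ladder_edges :
  path (fun u v => u != - v) (- e n.-1) (ladder_tail x y) = first_bits_differ (x, y).
Proof.
have lt_n1 : (n.-1 < n)%N by rewrite prednK.
have lt_find (b : seq bool) : size b = n.-1 -> (find id b < n)%N.
  by move=> sb; rewrite (leq_ltn_trans (find_size _ _)) ?sb.
have all_x : all (fun i => i < n)%N (n.-1 :: rev (positions x)).
  by rewrite /= lt_n1 all_rev; apply/allP => i /positions_lt; rewrite size_x; lia.
have last_neg : last n.-1 (rev (positions x)) = find id x.
  rewrite -size_x -head_positions; case: (positions x) => //= i s.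
  by rewrite rev_cons last_rcons.
have pos_y : positions (rcons y true) =
             find id y :: behead (positions (rcons y true)).
  by rewrite positions_rcons -head_positions; case: (positions y).
rewrite /ladder_tail -map_rev cat_path (last_map (fun i => - e i)) last_neg.
rewrite (path_map_all (fun i : nat => (i < n)%N) (fun i => - e i)) //; last first.
  by move=> i j _ lt_jn; rewrite opprK opp_evec_neq.
rewrite pos_y /= eqr_opp (path_map_all (fun i : nat => (i < n)%N) e) ?andbT.
- congr negb; apply/eqP/eqP => [/(evec_inj (lt_find x size_x))|->] //.
- by move=> i j lt_in _; rewrite eq_sym opp_evec_neq.
- by rewrite -pos_y positions_bounded.
Qed.

Lemma ladder_neg_bits : x = [seq - e i \in ladder x y | i <- iota 0 n.-1].
Proof.
apply: (@eq_from_nth _ false); rewrite ?size_map ?size_iota // => i lt_i.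
rewrite (nth_map 0) ?nth_iota ?size_iota -?size_x // add0n mem_ladder_neg.
  by rewrite nth_rcons lt_i.
by rewrite (leq_trans lt_i) // size_x leq_pred.
Qed.

Lemma ladder_pos_bits : y = [seq e i \in ladder x y | i <- iota 0 n.-1].
Proof.
apply: (@eq_from_nth _ false); rewrite ?size_map ?size_iota // => i lt_i.
rewrite (nth_map 0) ?nth_iota ?size_iota -?size_y // add0n mem_ladder_pos.
  by rewrite nth_rcons lt_i.
by rewrite (leq_trans lt_i) // size_y leq_pred.
Qed.

End OneLadder.

Lemma ladder_inj x y x' y' :
  size x = n.-1 -> size y = n.-1 -> size x' = n.-1 -> size y' = n.-1 ->
  ladder x y = ladder x' y' -> (x, y) = (x', y').
Proof.
move=> sx sy sx' sy' eq_l; congr pair.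
- by rewrite (ladder_neg_bits sx sy) (ladder_neg_bits sx' sy') eq_l.
- by rewrite (ladder_pos_bits sx sy) (ladder_pos_bits sx' sy') eq_l.
Qed.

End Ladders.

Section MonotonePaths.
Context {R : realFieldType} {n : nat} {a : 'I_n -> R}.
Hypothesis a_pos : forall i : 'I_n, 0 < a i.
Hypothesis a_incr : forall i j : 'I_n, (i < j)%N -> a i < a j.
Hypothesis n_gt0 : (0 < n)%N.
Local Notation e := (evec R n).

Lemma phi_evec (i : 'I_n) : phi a (e i) = a i.
Proof.
rewrite /phi (bigD1 i) //= mxE eqxx mulr1 big1 ?addr0 // => j neq_ji.
by rewrite mxE; case: eqP => [/val_inj eq_ji|]; [rewrite eq_ji eqxx in neq_ji|rewrite mulr0].
Qed.

Lemma phiN v : phi a (- v) = - phi a v.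
Proof. by rewrite /phi -sumrN; apply: eq_bigr => i _; rewrite mxE mulrN. Qed.

Lemma phi_evec_gt0 k : (k < n)%N -> 0 < phi a (e k).
Proof. by move=> lt_kn; rewrite (phi_evec (Ordinal lt_kn)). Qed.

Lemma phi_evec_lt k j : (k < j)%N -> (j < n)%N -> phi a (e k) < phi a (e j).
Proof.
move=> lt_kj lt_jn; have lt_kn := ltn_trans lt_kj lt_jn.
by rewrite (phi_evec (Ordinal lt_kn)) (phi_evec (Ordinal lt_jn)) a_incr.
Qed.

(* phi is negative on the first half of a ladder, positive on the second, and
   strictly increasing on each half; hence along the whole ladder. *)
Lemma ladder_sorted {x y : seq bool} : size x = n.-1 -> size y = n.-1 ->
  sorted (fun u v => phi a u < phi a v) (ladder x y).
Proof.
move=> size_x size_y; rewrite -sorted_map /ladder map_cat map_rev -!map_comp.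
have bx := positions_bounded n_gt0 size_x; have by_ := positions_bounded n_gt0 size_y.
apply: (sorted_cat_pivot 0).
- rewrite rev_sorted; apply: (homo_sorted_in _ bx (positions_sorted _)).
  by move=> i j _ lt_jn lt_ij /=; rewrite !phiN ltrN2 phi_evec_lt.
- apply: (homo_sorted_in _ by_ (positions_sorted _)).
  by move=> i j _ lt_jn lt_ij /=; rewrite phi_evec_lt.
- rewrite all_rev all_map; apply: sub_all bx => i lt_in /=.
  by rewrite phiN oppr_lt0 phi_evec_gt0.
- by rewrite all_map; apply: sub_all by_ => i lt_in /=; rewrite phi_evec_gt0.
Qed.

Lemma ladder_monotone x y : size x = n.-1 -> size y = n.-1 ->
  first_bits_differ (x, y) -> monotone_path a (ladder x y).
Proof.
move=> size_x size_y differ; exists (ladder_tail x y); first exact: ladder_cons.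
split; [exact: ladder_vertices | exact: ladder_last |].
rewrite path_relI ladder_edges // differ /=.
by have := ladder_sorted size_x size_y; rewrite (ladder_cons size_x).
Qed.

(* Conversely, a monotone path is the ladder of the bit strings recording which
   vertices -e_i and e_i (i < n - 1) it visits: both are phi-sorted lists with the
   same vertices. *)
Lemma monotone_ladder s : monotone_path a s ->
  exists x y, [/\ size x = n.-1, size y = n.-1, first_bits_differ (x, y) & s = ladder x y].
Proof.
case=> tl s_def [s_vert s_last]; rewrite path_relI => /andP[s_edges s_sorted].
pose x := [seq - e i \in s | i <- iota 0 n.-1].
pose y := [seq e i \in s | i <- iota 0 n.-1].
have size_x : size x = n.-1 by rewrite size_map size_iota.
have size_y : size y = n.-1 by rewrite size_map size_iota.
have s_ladder : s = ladder x y.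
  apply: (irr_sorted_eq (leT := fun u v => phi a u < phi a v)).
  - by move=> v u w; apply: lt_trans.
  - by move=> u; rewrite ltxx.
  - by rewrite s_def.
  - exact: ladder_sorted.
  apply: eq_mem_vertices => // [|i lt_in]; first exact: ladder_vertices.
  have le_i : (i <= n.-1)%N by rewrite -ltnS prednK.
  have neg_end : - e n.-1 \in s by rewrite s_def mem_head.
  have pos_end : e n.-1 \in s by rewrite -s_last s_def mem_last.
  by rewrite mem_ladder_pos ?mem_ladder_neg // !nth_rcons_bits.
exists x, y; split => //.
move: s_ladder; rewrite s_def (ladder_cons size_x) => -[tl_def].
by rewrite -(ladder_edges (R := R) n_gt0 size_x size_y) -tl_def.
Qed.

End MonotonePaths.

Theorem theorem1p1 (R : realFieldType) (n : nat) (a : 'I_n -> R) :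
  (2 <= n)%N ->
  (forall i : 'I_n, 0 < a i) ->
  (forall i j : 'I_n, (i < j)%N -> a i < a j) ->
  exists L : seq (seq 'rV[R]_n),
    [/\ uniq L,
        (forall s, s \in L <-> monotone_path a s) &
        size L = ((2 ^ (2 * n - 1) - 2) %/ 3)%N].
Proof.
move=> n_ge2 a_pos a_incr; have n_gt0 : (0 < n)%N by apply: ltnW.
pose good := [seq p <- bitpairs n.-1 | first_bits_differ p].
have good_sizes p : p \in good -> size p.1 = n.-1 /\ size p.2 = n.-1.
  by rewrite mem_filter mem_bitpairs => /and3P[_ /eqP ? /eqP ?].
exists [seq @ladder R n p.1 p.2 | p <- good]; split.
- rewrite map_inj_in_uniq ?filter_uniq ?uniq_bitpairs // => -[x y] [x' y'].
  by move=> /good_sizes[sx sy] /good_sizes[sx' sy']; apply: ladder_inj.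
- move=> s; split.
  + case/mapP=> p p_good ->; have [sx sy] := good_sizes p p_good.
    by move: p_good; rewrite mem_filter => /andP[differ _]; apply: ladder_monotone.
  + case/(monotone_ladder a_pos a_incr n_gt0) => x [y [sx sy differ ->]].
    by apply/mapP; exists (x, y); rewrite // mem_filter differ mem_bitpairs sx sy !eqxx.
- have -> : (2 * n - 1 = (n.-1).+1 + n.-1)%N by lia.
  rewrite size_map size_filter expnD expnS -mulnA -count_first_bits_differ.
  by rewrite mulKn.
Qed.
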